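(* Let $(M,g)$ be a Riemannian manifold and $F_1,\dots,F_k:M\to\mathbb{R}$ smooth with $\det\Sigma_{(F_1,\dots,F_k)}^{(F_1,\dots,F_k)}\neq0$ everywhere on $M$. Then for every $\alpha\in\Omega^1(M)$ and every $X_0\in\mathcal{X}_{tan}(M)$, $$\mathbf{T}(\alpha,\flat_T(X_0))=\alpha(X_0).$$
   Context: $\langle\cdot,\cdot\rangle$ is the inner product of $g$, $\nabla$ the gradient, $g^{-1}$ the inverse metric as a contravariant 2-tensor, $\flat_g(X)=g(X,\cdot)$. $\Sigma_{(g_1,\dots,g_s)}^{(f_1,\dots,f_r)}$ is the $r\times s$ matrix with entry $\langle\nabla g_b,\nabla f_a\rangle$ in row $a$, column $b$; $\widehat{\cdot}$ denotes omission; empty determinant is $1$. $\nabla F_i\otimes\nabla F_j(\alpha,\beta):=\alpha(\nabla F_i)\beta(\nabla F_j)$ and $$\mathbf{T}:=\sum_{i,j=1}^k(-1)^{i+j+1}\det\Sigma_{(F_1,\dots,\widehat{F_i},\dots,F_k)}^{(F_1,\dots,\widehat{F_j},\dots,F_k)}\nabla F_i\otimes\nabla F_j+\det\Sigma_{(F_1,\dots,F_k)}^{(F_1,\dots,F_k)}g^{-1}.$$ $\mathcal{X}_{tan}(M)=\{X\in\mathcal{X}(M)\mid dF_s(X)=0,\ s=1,\dots,k\}$, $\Omega^1_{tan}(M)=\{\alpha\in\Omega^1(M)\mid\alpha(\nabla F_s)=0,\ s=1,\dots,k\}$. The map $\sharp_T(\alpha):=\mathbf{T}(\alpha,\cdot)$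 restricts to a bijection $\Omega^1_{tan}(M)\to\mathcal{X}_{tan}(M)$, and $\flat_T:\mathcal{X}_{tan}(M)\to\Omega^1_{tan}(M)$ is its inverse; explicitly $\flat_T(X)=\frac{1}{\det\Sigma_{(F_1,\dots,F_k)}^{(F_1,\dots,F_k)}}\flat_g(X)$. *)

(* Pointwise (fiberwise) model of the tensors on a Riemannian
   manifold. *)
From HB Require Import structures.
From mathcomp Require Import all_boot all_order all_algebra.
Set Implicit Arguments. Unset Strict Implicit. Unset Printing Implicit Defensive.
Import Order.TTheory GRing.Theory Num.Theory.
Local Open Scope ring_scope.

Section Defs.
Variables (R : realFieldType) (n k : nat).

(* metric tensor g at a point: matrix of g in the (global) frame *)
Definition is_metric (G : 'M[R]_n) : Prop :=
  G^T = G /\ forall v : 'cV[R]_n, v != 0 -> 0 < (v^T *m G *m v) 0 0.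

Definition ginner (G : 'M[R]_n) (u v : 'cV[R]_n) : R := (u^T *m G *m v) 0 0.

(* gradient of a function with differential dF (a covector) *)
Definition grad (G : 'M[R]_n) (dF : 'rV[R]_n) : 'cV[R]_n := invmx G *m dF^T.

Definition ginv (G : 'M[R]_n) (a b : 'rV[R]_n) : R := (a *m invmx G *m b^T) 0 0.

Definition ev (a : 'rV[R]_n) (X : 'cV[R]_n) : R := (a *m X) 0 0.

Definition flat_g (G : 'M[R]_n) (X : 'cV[R]_n) : 'rV[R]_n := (G *m X)^T.

Definition Sigma (G : 'M[R]_n) (dF : 'I_k -> 'rV[R]_n) : 'M[R]_k :=
  \matrix_(a, b) ginner G (grad G (dF b)) (grad G (dF a)).

(* Sigma^{(F_1,..,^F_j,..,F_k)}_{(F_1,..,^F_i,..,F_k)}: delete row j and column i *)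
Definition Sigma_minor (G : 'M[R]_n) (dF : 'I_k -> 'rV[R]_n) (i j : 'I_k)
  : 'M[R]_k.-1 := row' j (col' i (Sigma G dF)).

Definition Ttens (G : 'M[R]_n) (dF : 'I_k -> 'rV[R]_n) (a b : 'rV[R]_n) : R :=
  \sum_(i < k) \sum_(j < k)
     (-1) ^+ (i + j + 1) * \det (Sigma_minor G dF i j)
       * ev a (grad G (dF i)) * ev b (grad G (dF j))
  + \det (Sigma G dF) * ginv G a b.

Definition flat_T (G : 'M[R]_n) (dF : 'I_k -> 'rV[R]_n) (X : 'cV[R]_n)
  : 'rV[R]_n := (\det (Sigma G dF))^-1 *: flat_g G X.

End Defs.

From HB Require Import structures.
From mathcomp Require Import all_boot all_order all_algebra.
Import Order.TTheory GRing.Theory Num.Theory.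
Local Open Scope ring_scope.

(* Since [flat_T X0] is a multiple of [flat_g X0], pairing it with a gradient
   gives [dF_i X0 = 0]; hence all correction terms of [T] vanish, and what is
   left is [det Sigma * g^{-1}(alpha, flat_g X0) / det Sigma = alpha(X0)]. *)

Section MetricPairing.
Variables (R : realFieldType) (n : nat) (G : 'M[R]_n).

Lemma metric_unitmx : is_metric G -> G \in unitmx.
Proof.
move=> [_ hpos]; rewrite unitmxE unitfE; apply/negP => /det0P [v v0 hv].
have vT0 : v^T != 0 by apply: contra v0 => /eqP vT0; rewrite -[v]trmxK vT0 trmx0.
by have := hpos v^T vT0; rewrite trmxK hv mul0mx mxE ltxx.
Qed.

Hypothesis G_unit : G \in unitmx.

Lemma ginv_flat_g (a : 'rV[R]_n) (X : 'cV[R]_n) : ginv G a (flat_g G X) = ev a X.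
Proof. by rewrite /ginv /flat_g trmxK mulmxA -(mulmxA a) mulVmx // mulmx1. Qed.

Lemma ginvZr (a b : 'rV[R]_n) (c : R) : ginv G a (c *: b) = c * ginv G a b.
Proof. by rewrite /ginv linearZ /= -scalemxAr mxE. Qed.

Hypothesis G_sym : G^T = G.

Lemma ev_flat_g_grad (dF : 'rV[R]_n) (X : 'cV[R]_n) :
  ev (flat_g G X) (grad G dF) = ev dF X.
Proof.
rewrite /ev /flat_g /grad trmx_mul G_sym -mulmxA (mulmxA G) mulmxV // mul1mx.
by rewrite -trmx_mul mxE.
Qed.

End MetricPairing.

Arguments metric_unitmx {R n G}.

Lemma flat_T_grad_tangent (R : realFieldType) (n k : nat) (G : 'M[R]_n)
  (dF : 'I_k -> 'rV[R]_n) (X : 'cV[R]_n) (j : 'I_k) :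
  G \in unitmx -> G^T = G -> ev (dF j) X = 0 ->
  ev (flat_T G dF X) (grad G (dF j)) = 0.
Proof.
move=> G_unit G_sym X_tan.
rewrite /flat_T /ev -scalemxAl mxE -/(ev _ _) ev_flat_g_grad //.
by rewrite X_tan mulr0.
Qed.

Theorem lemma4p5 (R : realFieldType) (n k : nat) (M : Type)
  (g : M -> 'M[R]_n) (dF : M -> 'I_k -> 'rV[R]_n)
  (hg : forall p : M, is_metric (g p))
  (hdet : forall p : M, \det (Sigma (g p) (dF p)) != 0)
  (alpha : M -> 'rV[R]_n) (X0 : M -> 'cV[R]_n)
  (hX0 : forall (p : M) (s : 'I_k), ev (dF p s) (X0 p) = 0) :
  forall p : M,
    Ttens (g p) (dF p) (alpha p) (flat_T (g p) (dF p) (X0 p)) = ev (alpha p) (X0 p).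
Proof.
move=> p; have G_unit := metric_unitmx (hg p); have [G_sym _] := hg p.
have corrections0 : forall i j : 'I_k,
    (-1) ^+ (i + j + 1) * \det (Sigma_minor (g p) (dF p) i j)
      * ev (alpha p) (grad (g p) (dF p i))
      * ev (flat_T (g p) (dF p) (X0 p)) (grad (g p) (dF p j)) = 0.
  by move=> i j; rewrite flat_T_grad_tangent // mulr0.
rewrite /Ttens big1 ?add0r => [|i _]; last by apply: big1 => j _; exact: corrections0.
by rewrite ginvZr // ginv_flat_g // mulrA mulfV ?hdet // mul1r.
Qed.
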